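(* Let $r,n$ be positive integers, let $\pi_0\in G_{r,n}$, let $M=(t_i^j)$ be its associated $\{a,b\}$-matrix and $w=w_{\pi_0}$ the associated excedance word. Write $\Psi(w)=(a^{n_1}x_1a^{n_2}x_2\cdots x_ka^{n_{k+1}})$ with $x_i\in\{b,a+b\}$, $n_i\ge 0$, where $k$ is the number of letters of $\Psi(w)$ different from $a$. Let $I(w)=\{i\in\{1,\dots,k\}: x_i=a+b\}$, $$R_k=\{\mathbf r=(r_1,\dots,r_{k+1})\in\mathbb{Z}^{k+1} : r_1=1,\ r_{i+1}-r_i\in\{0,1\}\text{ for all }i,\ r_{i+1}-r_i=1\text{ if } i\in I(w)\},$$ $h(\mathbf r)=|\{i\in\{1,\dots,k\}: r_i=r_{i+1}\}|$, and $\mathbf r^{\mathbf n(w)+\mathbf 1}=\prod_{i=1}^{k+1}r_i^{\,n_i+1}$. Then $$[w]=[\Psi(w)]=\sum_{\mathbf r\in R_k}(-1)^{h(\mathbf r)}\,\mathbf r^{\mathbf n(w)+\mathbf 1}.$$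
   Context: Let $\Sigma=\{i^{[j]} : i\in\{1,\dots,n\},\ j\in\{0,\dots,r-1\}\}$ (color indices modulo $r$). The group $G_{r,n}$ is realized as the set of bijections $\pi:\Sigma\to\Sigma$ such that $\pi(i^{[\alpha]})=j^{[\beta]}$ implies $\pi(i^{[\alpha+1]})=j^{[\beta+1]}$. Color order on $\Sigma$: $i^{[\alpha]}<j^{[\beta]}$ iff $\alpha>\beta$, or $\alpha=\beta$ and $i<j$. For $\pi\in G_{r,n}$ the matrix $M(\pi)=(t_i^j)$, $1\le i\le n$, $j=r-1,\dots,0$, has $t_i^j=b$ if $\pi(i^{[j]})>i^{[j]}$ and $t_i^j=a$ otherwise. The excedance word $w_\pi\in\{a,b\}^{rn-1}$ is the concatenation, for $j=r-1,\dots,0$, of $t_1^j\cdots t_n^j$, with the final letter $t_n^0$ deleted; for $w\in\{a,b\}^{rn-1}$, $[w]=\#\{\pi\in G_{r,n}: w_\pi=w\}$. The map $\Psi$ sends $M=(t_i^j)$ (equivalently its word $w$) to the word $\Psi(w)=(w'_1\cdots w'_{n-1})\in\{a,b,a+b\}^{n-1}$ with $w'_i=a$ if $t_i^j=a$ for all $j$, $w'_i=b$ if $t_i^j=b$ for all $j$, and $w'_i=a+b$ otherwise. For $\sigma\in S_n$ its excedance word is $w_\sigma=u_1\cdots u_{n-1}$ with $u_i=b$ if $\sigma(i)>i$ and $u_i=a$ otherwise; for $w'\in\{a,b,a+b\}^{n-1}$, $[w']$ is the number of $\sigma\in S_n$ such that for every $i$ with $w'_i\in\{a,b\}$ one has $u_i=w'_i$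 (a letter $a+b$ imposes no condition). *)

From HB Require Import structures.
From mathcomp Require Import all_boot all_order all_algebra all_fingroup.
Set Implicit Arguments. Unset Strict Implicit. Unset Printing Implicit Defensive.
Import Order.TTheory GRing.Theory Num.Theory.

(* Colored letters i^[j] are pairs (i, j) : 'I_n * 'I_r, with 0-based
   letter index i (paper's i = val i + 1) and color j in 'I_r. *)
Definition sigma_t (r n : nat) := ('I_n * 'I_r)%type.

Definition inG (r n : nat) (pi : {perm sigma_t r n}) : bool :=
  [forall x : sigma_t r n,
     pi (x.1, ordS x.2) == ((pi x).1, ordS (pi x).2)].

Definition col_lt (r n : nat) (x y : sigma_t r n) : bool :=
  (y.2 < x.2)%N || ((x.2 == y.2) && (x.1 < y.1)%N).

(* t_i^j = b (true) iff pi(i^[j]) > i^[j]; false encodes letter a *)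
Definition tmat (r n : nat) (pi : {perm sigma_t r n}) (i : 'I_n) (j : 'I_r)
  : bool := col_lt (i, j) (pi (i, j)).

Definition exc_word (r n : nat) (pi : {perm sigma_t r n}) : seq bool :=
  take (r * n).-1
    (flatten [seq [seq tmat pi i j | i <- enum 'I_n] | j <- rev (enum 'I_r)]).

Definition cnt_G (r n : nat) (w : seq bool) : nat :=
  #|[set pi : {perm sigma_t r n} | inG pi && (exc_word pi == w)]|.

Definition letter := option bool.
Definition La : letter := Some false.
Definition Lb : letter := Some true.
Definition Lab : letter := None.

Definition letter_of (s : seq bool) : letter :=
  if all (fun t => ~~ t) s then La
  else if all id s then Lb else Lab.

(* Psi(w): w'_i for i = 1..n-1 (0-based i here), using t_i^j, which sits at
   position (r-1-j)*n + (i-1) of the word w. *)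
Definition Psi (r n : nat) (w : seq bool) : seq letter :=
  [seq letter_of [seq nth false w ((r - 1 - j) * n + i) | j <- iota 0 r]
  | i <- iota 0 n.-1].

Definition cnt_S (n : nat) (w' : seq letter) : nat :=
  #|[set s : 'S_n | [forall i : 'I_n, (i < n.-1)%N ==>
        match nth Lab w' i with
        | Some c => ((i < s i)%N == c)
        | None => true
        end]]|.

Fixpoint assemble (ns : seq nat) (xs : seq letter) : seq letter :=
  match ns, xs with
  | m :: ns', x :: xs' => nseq m La ++ x :: assemble ns' xs'
  | m :: _, [::] => nseq m La
  | [::], _ => [::]
  end.

(* Every r in R_k has 1 <= r_i <= k+1, so R_k is enumerated as the functions
   rr : 'I_(k+1) -> 'I_(k+2) satisfying the defining conditions
   (rr at 0-based position i is r_{i+1}). *)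
Definition rr_at (k : nat) (rr : {ffun 'I_k.+1 -> 'I_k.+2}) (i : nat) : nat :=
  rr (inord i).

Definition in_Rk (k : nat) (xs : seq letter) (rr : {ffun 'I_k.+1 -> 'I_k.+2})
  : bool :=
  (rr_at rr 0 == 1%N) &&
  [forall i : 'I_k,
     ((rr_at rr i.+1 == rr_at rr i) || (rr_at rr i.+1 == (rr_at rr i).+1)) &&
     ((nth La xs i == Lab) ==> (rr_at rr i.+1 == (rr_at rr i).+1))].

Definition h_of (k : nat) (rr : {ffun 'I_k.+1 -> 'I_k.+2}) : nat :=
  #|[set i : 'I_k | rr_at rr i.+1 == rr_at rr i]|.

Definition rhs_sum (ns : seq nat) (xs : seq letter) : int :=
  let k := size xs in
  \sum_(rr : {ffun 'I_k.+1 -> 'I_k.+2} | in_Rk xs rr)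
     ((-1) ^+ h_of rr *
      \prod_(i < k.+1) ((rr_at rr i)%:Z ^+ (nth 0%N ns i).+1))%R.

From HB Require Import structures.
From mathcomp Require Import all_boot all_order all_algebra all_fingroup.
From mathcomp Require Import zify.
Import Order.TTheory GRing.Theory Num.Theory.

Set Implicit Arguments. Unset Strict Implicit. Unset Printing Implicit Defensive.

(* An element of G_{r,n} is a permutation s of the letters together with color
   shifts c_i, acting by i^[j] |-> (s i)^[j + c_i mod r].  Its excedance entries are
   t_i^j = [i < s i] if c_i = 0 and t_i^j = [r <= c_i + j] otherwise, so the word w
   determines every shift c_i, and at the positions with c_i = 0 also the excedance
   letter of s; the remaining positions read a+b in Psi(w) and are free.  This gives
   [w] = [Psi(w)].
   For the formula, write each letter b of Psi(w) as (a+b) - a and expand: [Psi(w)]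
   becomes a signed sum of counts of words over {a, a+b}.  For such a word the position
   sent to the largest value is either the last one or carries a+b, so the count is the
   product over i of 1 + #{letters a+b among the first i - 1}.  Recording the expansion
   choices as the increments of a vector r turns the signed sum into the sum over R_k. *)

Lemma modnSml m d : (m %% d).+1 = m.+1 %[mod d].
Proof. by rewrite -addn1 modnDml addn1. Qed.

Lemma nth_flatten_map_const_size (I T : Type) (x0 : T) (y0 : I)
    (g : I -> seq T) (s : seq I) k q i :
  (forall y, size (g y) = k) -> (i < k)%N -> (q < size s)%N ->
  nth x0 (flatten (map g s)) (q * k + i) = nth x0 (g (nth y0 s q)) i.
Proof.
move=> gk ltik; elim: s q => [|y s IHs] [|q] //= ltqs.
  by rewrite nth_cat gk ltik.
rewrite nth_cat gk ltnNge mulSn -addnA leq_addr /= -IHs //.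
by congr nth; lia.
Qed.

Lemma nth_cat_cons_neq (T : Type) (x0 : T) (U V : seq T) x y i : i != size U ->
  nth x0 (U ++ x :: V) i = nth x0 (U ++ y :: V) i.
Proof.
move=> neq_iU; rewrite !nth_cat; case: ltnP => // leUi.
by have /prednK <- : (0 < i - size U)%N by rewrite subn_gt0 ltn_neqAle eq_sym neq_iU.
Qed.

Lemma count_sum_nth (T : Type) (x0 : T) (a : pred T) (s : seq T) :
  count a s = \sum_(i < size s) a (nth x0 s i).
Proof.
elim: s => [|x s IHs]; first by rewrite big_ord0.
by rewrite big_ord_recl /= IHs.
Qed.

Lemma count_take_nth (T : Type) (x0 : T) (a : pred T) (s : seq T) i : (i < size s)%N ->
  count a (take i.+1 s) = count a (take i s) + a (nth x0 s i).
Proof. by move=> lti; rewrite (take_nth x0 lti) -cats1 count_cat /= addn0. Qed.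

Section ColoredPermutations.

Variables (r n : nat).
Hypothesis r_gt0 : (0 < r)%N.

Definition cperm_fun (s : 'S_n) (c : 'I_n -> 'I_r) (x : sigma_t r n) :
  sigma_t r n := (s x.1, Ordinal (ltn_pmod (c x.1 + x.2) r_gt0)).

Lemma cperm_fun_inj s c : injective (cperm_fun s c).
Proof.
move=> [i j] [i' j'] [/perm_inj <- /eqP ejj']; congr pair; apply: val_inj.
by move: ejj'; rewrite /= eqn_modDl !modn_small //; apply: eqP.
Qed.

Definition cperm s c : {perm sigma_t r n} := perm (@cperm_fun_inj s c).

Lemma cpermE s c i j :
  cperm s c (i, j) = (s i, Ordinal (ltn_pmod (c i + j) r_gt0)).
Proof. by rewrite permE. Qed.

Lemma inG_cperm s c : inG (cperm s c).
Proof.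
apply/forallP => -[i j]; rewrite !cpermE /=; apply/eqP.
by congr pair; apply: val_inj; rewrite /= modnDmr modnSml addnS.
Qed.

Lemma iter_ordS m (x : 'I_r) : iter m (@ordS r) x = (x + m) %% r :> nat.
Proof.
elim: m => [|m IHm] /=; first by rewrite addn0 modn_small.
by rewrite IHm modnSml addnS.
Qed.

Lemma inG_exists_cperm pi : inG pi -> exists s c, pi = cperm s c.
Proof.
move=> /forallP piG; pose o0 := Ordinal r_gt0.
pose sf i := (pi (i, o0)).1; pose c i := (pi (i, o0)).2.
have pi_iter i m :
    pi (i, iter m (@ordS r) o0) = (sf i, iter m (@ordS r) (c i)).
  elim: m => [|m IHm] /=; first by rewrite /sf /c; case: (pi _).
  by rewrite (eqP (piG (i, iter m (@ordS r) o0))) /= IHm.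
have piE i (j : 'I_r) : pi (i, j) = (sf i, Ordinal (ltn_pmod (c i + j) r_gt0)).
  have iter_j : iter j (@ordS r) o0 = j.
    by apply: ord_inj; rewrite iter_ordS add0n modn_small.
  by rewrite -{1}iter_j pi_iter; congr pair; apply: ord_inj; rewrite iter_ordS.
have sf_inj : injective sf.
  move=> i i' eq_sf.
  have ltj : (c i' + r - c i) %% r < r by rewrite ltn_pmod.
  have := piE i (Ordinal ltj); rewrite eq_sf.
  have -> : Ordinal (ltn_pmod (c i + Ordinal ltj) r_gt0) = c i'.
    apply: val_inj; rewrite /= modnDmr.
    have -> : c i + (c i' + r - c i) = c i' + r by have := ltn_ord (c i); lia.
    by rewrite modnDr modn_small.
  have <- : pi (i', o0) = (sf i', c i') by rewrite /sf /c; case: (pi _).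
  by move/perm_inj => [].
exists (perm sf_inj), c; apply/permP => -[i j].
by rewrite piE cpermE permE.
Qed.

Lemma tmat_cperm s c i j :
  tmat (cperm s c) i j = if c i == 0 :> nat then (i < s i)%N else (r <= c i + j)%N.
Proof.
rewrite /tmat /col_lt cpermE /= -val_eqE /=.
have ltc := ltn_ord (c i); have ltj := ltn_ord j.
have [ltcj | lecj] := ltnP (c i + j) r.
  rewrite modn_small //; have [->|c_neq0] := eqVneq (c i : nat) 0.
    by rewrite add0n ltnn eqxx.
  have -> : (j == c i + j :> nat) = false by apply/negbTE; lia.
  by rewrite andFb orbF; apply/negbTE; rewrite -leqNgt; lia.
have -> : (c i + j) %% r = c i + j - r.
  by rewrite -{1}(subnK lecj) modnDr modn_small //; lia.
have -> : (c i == 0 :> nat) = false by apply/negbTE; lia.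
by apply/orP; left; lia.
Qed.

Lemma exc_word_pos_lt i j : (i < n)%N -> (j < r)%N -> (0 < j) || (i < n.-1) ->
  ((r - 1 - j) * n + i < (r * n).-1)%N.
Proof. by move=> ? ? /orP[]; nia. Qed.

Lemma nth_exc_word pi (i : 'I_n) (j : 'I_r) :
  ((r - 1 - j) * n + i < (r * n).-1)%N ->
  nth false (exc_word pi) ((r - 1 - j) * n + i) = tmat pi i j.
Proof.
move=> ltpos; have ltj := ltn_ord j.
rewrite /exc_word nth_take // (@nth_flatten_map_const_size _ _ _ j _ _ n);
  rewrite ?size_rev ?size_enum_ord //; last 2 first.
- by move=> y; rewrite size_map size_enum_ord.
- by lia.
rewrite nth_rev ?size_enum_ord; last by lia.
have -> : r - (r - 1 - j).+1 = j by lia.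
by rewrite nth_ord_enum (nth_map i) ?size_enum_ord // nth_ord_enum.
Qed.

Section SameWord.

Variables (s s0 : 'S_n) (c c0 : 'I_n -> 'I_r).
Hypothesis same_word : exc_word (cperm s c) = exc_word (cperm s0 c0).

Lemma tmat_same_word (i : 'I_n) (j : 'I_r) : (0 < j) || (i < n.-1) ->
  tmat (cperm s c) i j = tmat (cperm s0 c0) i j.
Proof.
by move=> /(exc_word_pos_lt (ltn_ord i) (ltn_ord j)) pos; rewrite -!nth_exc_word ?same_word.
Qed.

Lemma color0_same_word i : c i = 0 :> nat -> c0 i = 0 :> nat.
Proof.
move=> ci0; apply/eqP; apply: contraT => c0i_neq0.
have ltr1 : (r.-1 < r)%N by rewrite ltn_predL.
have r1_gt0 : (0 < r.-1)%N by have := ltn_ord (c0 i); lia.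
have ltis : (i < s i)%N.
  have := tmat_same_word (i := i) (j := Ordinal ltr1); rewrite /= r1_gt0.
  rewrite !tmat_cperm ci0 eqxx (negbTE c0i_neq0) => /(_ isT) -> /=; lia.
have lti : (i < n.-1)%N by have := ltn_ord (s i); lia.
have := tmat_same_word (i := i) (j := Ordinal r_gt0); rewrite /= lti.
by rewrite !tmat_cperm ci0 eqxx (negbTE c0i_neq0) ltis addn0 leqNgt ltn_ord => /(_ isT).
Qed.

Lemma color_le_same_word i : c i != 0 :> nat -> c0 i != 0 :> nat -> (c i <= c0 i)%N.
Proof.
move=> ci_neq0 c0i_neq0; have ltc := ltn_ord (c i).
have ltj : (r - c i < r)%N by lia.
have j_gt0 : (0 < r - c i)%N by lia.
have := tmat_same_word (i := i) (j := Ordinal ltj); rewrite /= j_gt0.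
rewrite !tmat_cperm (negbTE ci_neq0) (negbTE c0i_neq0).
have -> : (r <= c i + (r - c i))%N by lia.
by move=> /(_ isT) /esym /=; lia.
Qed.

End SameWord.

Lemma same_word_colors s s0 c c0 :
  exc_word (cperm s c) = exc_word (cperm s0 c0) -> c =1 c0.
Proof.
move=> same i; apply: ord_inj.
have [ci0|ci_neq0] := eqVneq (c i : nat) 0; first by rewrite ci0 (color0_same_word same).
have [c0i0|c0i_neq0] := eqVneq (c0 i : nat) 0.
  by move: ci_neq0; rewrite (color0_same_word (esym same)).
by apply/eqP; rewrite eqn_leq !(color_le_same_word same, color_le_same_word (esym same)).
Qed.

Lemma nth_Psi pi (i : 'I_n) : (i < n.-1)%N ->
  nth Lab (Psi r n (exc_word pi)) i = letter_of [seq tmat pi i j | j <- enum 'I_r].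
Proof.
move=> lti; rewrite /Psi (nth_map 0) ?size_iota // nth_iota // add0n.
rewrite -val_enum_ord -map_comp; congr letter_of; apply: eq_map => j /=.
by rewrite nth_exc_word // exc_word_pos_lt // lti orbT.
Qed.

Lemma nth_Psi_cperm s0 c0 (i : 'I_n) : (i < n.-1)%N ->
  nth Lab (Psi r n (exc_word (cperm s0 c0))) i =
  if c0 i == 0 :> nat then Some (i < s0 i)%N else Lab.
Proof.
move=> lti; rewrite nth_Psi //; under eq_map do rewrite tmat_cperm.
rewrite /letter_of; case: eqVneq => [_|c0i_neq0].
  case: (i < s0 i)%N; last first.
    by have -> : all (fun t => ~~ t) [seq false | _ <- enum 'I_r] by apply/allP => ? /mapP[? _ ->].
  have /negbTE -> : ~~ all (fun t => ~~ t) [seq true | _ <- enum 'I_r].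
    by apply/allPn; exists true => //; apply/mapP; exists (Ordinal r_gt0); rewrite ?mem_enum.
  by have -> : all id [seq true | _ <- enum 'I_r] by apply/allP => ? /mapP[? _ ->].
have ltr1 : (r.-1 < r)%N by rewrite ltn_predL.
have /negbTE -> : ~~ all (fun t => ~~ t) [seq (r <= c0 i + j)%N | j : 'I_r <- enum 'I_r].
  apply/allPn; exists true => //; apply/mapP; exists (Ordinal ltr1).
    by rewrite mem_enum.
  by move: c0i_neq0 => /=; lia.
have /negbTE -> // : ~~ all id [seq (r <= c0 i + j)%N | j : 'I_r <- enum 'I_r].
apply/allPn; exists false => //; apply/mapP; exists (Ordinal r_gt0); rewrite ?mem_enum //=.
by rewrite addn0 leqNgt ltn_ord.
Qed.

Definition agree_on_uncolored (c0 : 'I_n -> 'I_r) (s s0 : 'S_n) : bool :=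
  [forall i : 'I_n, (i < n.-1)%N && (c0 i == 0 :> nat) ==> ((i < s i) == (i < s0 i))%N].

Lemma exc_word_cperm_eq s s0 c0 :
  (exc_word (cperm s c0) == exc_word (cperm s0 c0)) = agree_on_uncolored c0 s s0.
Proof.
apply/eqP/forallP => [same i|agree].
  apply/implyP => /andP[lti /eqP c0i0].
  have := tmat_same_word same (i := i) (j := Ordinal r_gt0); rewrite /= lti.
  by rewrite !tmat_cperm c0i0 eqxx => /(_ isT) ->.
rewrite /exc_word; congr take; congr flatten; apply: eq_map => j; apply: eq_map => i.
rewrite !tmat_cperm; case: eqP => // c0i0.
move/implyP: (agree i); rewrite c0i0 eqxx andbT.
have [lti /(_ isT) /eqP //|lei _] := ltnP i n.-1.
by have := ltn_ord (s i); have := ltn_ord (s0 i); lia.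
Qed.

Lemma cnt_G_cperm s0 c0 :
  cnt_G r n (exc_word (cperm s0 c0)) = #|[set s | agree_on_uncolored c0 s s0]|.
Proof.
have cperm_inj : injective (cperm ^~ c0).
  move=> s s' eq_ss'; apply/permP => i.
  by have := congr1 (fun p : {perm sigma_t r n} => (p (i, Ordinal r_gt0)).1) eq_ss'; rewrite /= !cpermE.
rewrite /cnt_G -(card_imset _ cperm_inj); apply: eq_card => pi; rewrite inE.
apply/andP/imsetP => [[/inG_exists_cperm[s [c ->]] /eqP same]|[s]].
  have eq_c := same_word_colors same.
  have eq_cperm : cperm s c = cperm s c0.
    by apply/permP => -[i j]; rewrite !cpermE; congr pair; apply: val_inj; rewrite /= eq_c.
  by exists s; rewrite // inE -exc_word_cperm_eq -eq_cperm same.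
by rewrite inE -exc_word_cperm_eq => /eqP same ->; split; [exact: inG_cperm | apply/eqP].
Qed.

Lemma cnt_S_Psi_cperm s0 c0 :
  cnt_S n (Psi r n (exc_word (cperm s0 c0))) = #|[set s | agree_on_uncolored c0 s s0]|.
Proof.
apply: eq_card => s; rewrite !inE; apply: eq_forallb => i.
case: (ltnP i n.-1) => lti //=; rewrite nth_Psi_cperm //.
by case: eqP.
Qed.

Lemma cnt_G_Psi (pi0 : {perm sigma_t r n}) : inG pi0 ->
  cnt_G r n (exc_word pi0) = cnt_S n (Psi r n (exc_word pi0)).
Proof. by move=> /inG_exists_cperm[s0 [c0 ->]]; rewrite cnt_G_cperm cnt_S_Psi_cperm. Qed.

End ColoredPermutations.

Definition letter_ok (x : letter) (i v : nat) : bool :=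
  if x is Some e then (i < v) == e else true.

Definition compat n (W : seq letter) (s : 'S_n) : bool :=
  [forall i : 'I_n, letter_ok (nth Lab W i) i (s i)].

Definition ncompat n (W : seq letter) : nat := #|[set s : 'S_n | compat W s]|.

Lemma cnt_S_ncompat n W : size W = n.-1 -> cnt_S n W = ncompat n W.
Proof.
move=> sizeW; apply: eq_card => s; rewrite !inE; apply: eq_forallb => i.
by case: ltnP => lti //=; rewrite nth_default // sizeW.
Qed.

Lemma lift_perm_inj n (i j : 'I_n.+1) : injective (@lift_perm n i j).
Proof.
move=> s t eq_st; apply/permP => k; apply: (@lift_inj _ j).
by rewrite -!(lift_perm_lift i) eq_st.
Qed.

Lemma fixed_perm_lift n (i : 'I_n.+1) (s : 'S_n.+1) :
  s i = i -> exists t : 'S_n, s = lift_perm i i t.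
Proof.
move=> si; pose t_fun k := odflt k (unlift i (s (lift i k))).
have t_funK k : lift i (t_fun k) = s (lift i k).
  rewrite /t_fun; have := neq_lift i k.
  by rewrite -(inj_eq (@perm_inj _ s)) si => /unlift_some[? ? ->].
have t_inj : injective t_fun.
  by move=> k k' /(congr1 (lift i)); rewrite !t_funK => /perm_inj /lift_inj.
exists (perm t_inj); apply/permP => k.
case: (unliftP i k) => [k'|] ->; last by rewrite lift_perm_id.
by rewrite lift_perm_lift permE t_funK.
Qed.

Lemma compat_lift_perm_max n W (t : 'S_n) : size W = n ->
  compat W (lift_perm ord_max ord_max t) = compat W t.
Proof.
move=> sizeW; apply/forallP/forallP => ok_t i.
  by have := ok_t (lift ord_max i); rewrite lift_perm_lift !lift_max.
case: (unliftP ord_max i) => [k|] ->; first by rewrite lift_perm_lift !lift_max.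
by rewrite /= nth_default // sizeW.
Qed.

Lemma ncompat_fix_max n W : size W = n ->
  #|[set s : 'S_n.+1 | compat W s && (s ord_max == ord_max)]| = ncompat n W.
Proof.
move=> sizeW; rewrite /ncompat -(card_imset _ (@lift_perm_inj n ord_max ord_max)).
apply: eq_card => s; rewrite inE; apply/andP/imsetP => [[ok_s /eqP /fixed_perm_lift[t st]]|[t]].
  by exists t; rewrite // inE -(compat_lift_perm_max _ sizeW) -st.
by rewrite inE -(compat_lift_perm_max _ sizeW) => ok_t ->; rewrite lift_perm_id.
Qed.

Lemma ncompat_preimage_max n W (j : 'I_n.+1) :
  size W = n -> all (fun x => x != Lb) W ->
  #|[set s : 'S_n.+1 | compat W s && ((s^-1)%g ord_max == j)]| =
  (nth Lab W j == Lab) * ncompat n W.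
Proof.
move=> sizeW noB; case: eqP => [Wj|Wj].
  rewrite mul1n -(ncompat_fix_max sizeW) -!sum1_card.
  rewrite [RHS](reindex_inj (mulgI (tperm j ord_max))); apply: eq_bigl => s.
  rewrite !inE permM tpermR (canF_eq (permKV s)) eq_sym; congr andb.
  apply/forallP/forallP => ok_s i; have := ok_s i; rewrite permM;
    by case: tpermP => [->|->|]; rewrite ?Wj //= nth_default // sizeW.
rewrite mul0n; apply/eqP; rewrite cards_eq0; apply/eqP/setP => s.
rewrite !inE (canF_eq (permKV s)); apply/negbTE; apply/nandP.
have ltjn : (j < n)%N.
  by rewrite ltnNge; apply/negP => lenj; apply: Wj; rewrite nth_default ?sizeW.
have Wj_a : nth Lab W j = La.
  have /(allP noB) : nth Lab W j \in W by rewrite mem_nth ?sizeW.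
  by move: Wj; case: (nth Lab W j) => [[]|].
have [sj|] := eqVneq (s j) ord_max; last by right.
by left; apply/negP => /forallP/(_ j); rewrite Wj_a sj /= ltjn.
Qed.

Lemma ncompatS n W : size W = n -> all (fun x => x != Lb) W ->
  ncompat n.+1 W = (count (pred1 Lab) W).+1 * ncompat n W.
Proof.
move=> sizeW noB; rewrite {1}/ncompat -sum1_card.
rewrite (partition_big (fun s : 'S_n.+1 => (s^-1)%g ord_max) xpredT) //=.
rewrite (eq_bigr (fun j : 'I_n.+1 => (nth Lab W j == Lab) * ncompat n W)); last first.
  move=> j _; rewrite -(ncompat_preimage_max _ sizeW noB) sum1_card.
  by apply: eq_card => s; rewrite unfold_in /= !inE.
rewrite -big_distrl /= big_ord_recr /= nth_default ?sizeW // eqxx addn1.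
by rewrite (count_sum_nth Lab) sizeW.
Qed.

(* [slot_prod 1 W] is the product over i of 1 + #{letters a+b among the first i - 1}:
   the positions that may be sent to i by a permutation compatible with W. *)
Fixpoint slot_prod (c : nat) (W : seq letter) : nat :=
  if W is x :: W' then c * slot_prod (c + (x == Lab)) W' else c.

Lemma slot_prod_rcons c W x :
  slot_prod c (rcons W x) = slot_prod c W * (c + count (pred1 Lab) (rcons W x)).
Proof.
elim: W c => [|y W IHW] c /=; first by rewrite addn0.
by rewrite IHW mulnA addnA.
Qed.

Lemma ncompat_rcons m W x : size W = m -> x != Lb ->
  ncompat m.+1 (rcons W x) = ncompat m.+1 W.
Proof.
move=> sizeW xb; apply: eq_card => s; rewrite !inE; apply: eq_forallb => i.
rewrite nth_rcons sizeW; case: ltngtP => // [|->].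
  by have := ltn_ord i; rewrite ltnS leqNgt => /negbTE ->.
rewrite nth_default ?sizeW //; case: x xb => [[]|] //= _.
by rewrite ltnNge -ltnS ltn_ord.
Qed.

Lemma ncompat_slot_prod W : all (fun x => x != Lb) W ->
  ncompat (size W).+1 W = slot_prod 1 W.
Proof.
elim/last_ind: W => [|W x IHW].
  rewrite /ncompat (_ : [set s : 'S_1 | compat [::] s] = setT) ?cardsT ?card_Sn //.
  by apply/setP => s; rewrite !inE; apply/forallP => i; rewrite nth_nil.
rewrite all_rcons size_rcons => /andP[xb noB].
rewrite ncompatS ?size_rcons ?all_rcons ?xb //.
by rewrite ncompat_rcons // IHW // slot_prod_rcons mulnC add1n.
Qed.

Lemma compat_cat_cons n (U V : seq letter) x (p : 'I_n) (s : 'S_n) : p = size U :> nat ->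
  compat (U ++ x :: V) s = letter_ok x p (s p) &&
     [forall i : 'I_n, (i != p) ==> letter_ok (nth Lab (U ++ Lab :: V) i) i (s i)].
Proof.
move=> pU; have nth_p y : nth Lab (U ++ y :: V) p = y by rewrite nth_cat pU ltnn subnn.
apply/forallP/andP => [ok_s|[ok_p /forallP ok_s] i].
  split; first by rewrite -{1}(nth_p x); apply: ok_s.
  apply/forallP => i; apply/implyP => neq_ip.
  by rewrite (nth_cat_cons_neq Lab V Lab x) -?pU.
have [->|neq_ip] := eqVneq i p; first by rewrite nth_p.
by rewrite (nth_cat_cons_neq Lab V x Lab) -?pU //; apply: (implyP (ok_s i)).
Qed.

Lemma ncompat_split n (U V : seq letter) : (size U < n)%N ->
  ncompat n (U ++ Lab :: V) = ncompat n (U ++ Lb :: V) + ncompat n (U ++ La :: V).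
Proof.
move=> ltUn; pose p : 'I_n := Ordinal ltUn.
have compatE x s := @compat_cat_cons n U V x p s erefl.
have setU_ab : [set s : 'S_n | compat (U ++ Lab :: V) s] =
    [set s | compat (U ++ Lb :: V) s] :|: [set s | compat (U ++ La :: V) s].
  apply/setP => s; rewrite !inE !compatE /=.
  by case: (size U < s p)%N; rewrite ?orbF.
have setI_ab : [set s : 'S_n | compat (U ++ Lb :: V) s] :&: [set s | compat (U ++ La :: V) s] = set0.
  apply/setP => s; rewrite !inE !compatE /=.
  by case: (size U < s p)%N; rewrite ?andbF.
by rewrite /ncompat setU_ab cardsU setI_ab cards0 subn0.
Qed.

Fixpoint bool_seqs k : seq (seq bool) :=
  if k is k'.+1 then map (cons true) (bool_seqs k') ++ map (cons false) (bool_seqs k')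
  else [:: [::]].

(* Expanding b = (a+b) - a: a choice [true] keeps the letter a+b, [false] takes a. *)
Definition relax_letter (e : bool) : letter := if e then Lab else La.

Fixpoint admissible (xs : seq letter) (d : seq bool) : bool :=
  match xs, d with
  | x :: xs', e :: d' => ((x == Lab) ==> e) && admissible xs' d'
  | [::], [::] => true
  | _, _ => false
  end.

Definition alt_sign (d : seq bool) : int := ((-1) ^+ count negb d)%R.

Section InclusionExclusion.

Variables (N : nat) (F : seq letter -> int).
Hypothesis F_split : forall U V, (size U < N)%N ->
  F (U ++ Lb :: V) = (F (U ++ Lab :: V) - F (U ++ La :: V))%R.

Lemma incl_excl_assemble ns xs U :
  size ns = (size xs).+1 -> all (fun x => x != La) xs ->
  (size (U ++ assemble ns xs) <= N)%N ->
  F (U ++ assemble ns xs) =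
  (\sum_(d <- bool_seqs (size xs) | admissible xs d)
     alt_sign d * F (U ++ assemble ns (map relax_letter d)))%R.
Proof.
elim: xs ns U => [|x xs IHxs] [|m ns] U //=.
  by case: ns => // _ _ _; rewrite big_cons big_nil /= mul1r addr0.
move=> [size_ns] /andP[xa noA] sizeU; rewrite big_cat !big_map /=.
have IHy y : F (U ++ nseq m La ++ y :: assemble ns xs) =
   (\sum_(d <- bool_seqs (size xs) | admissible xs d)
     alt_sign d * F (U ++ nseq m La ++ y :: assemble ns (map relax_letter d)))%R.
  rewrite catA -cat_rcons IHxs //; last by move: sizeU; rewrite !(size_cat, size_rcons) /=; lia.
  by apply: eq_bigr => d _; rewrite cat_rcons -catA.
case: x xa sizeU => [[]|] // _ sizeU /=; last first.
  by rewrite [X in (_ + X)%R]big_pred0 // addr0 IHy.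
have ltUN : (size (U ++ nseq m La) < N)%N by move: sizeU; rewrite !size_cat /=; lia.
rewrite catA F_split // -!catA !IHy -sumrN; congr (_ + _)%R.
by apply: eq_bigr => d _; rewrite /alt_sign /= exprS mulN1r mulNr.
Qed.

End InclusionExclusion.

Lemma slot_prod_nseq c m W : slot_prod c (nseq m La ++ W) = c ^ m * slot_prod c W.
Proof. by elim: m => [|m IHm] /=; rewrite ?mul1n // addn0 IHm expnS mulnA. Qed.

Lemma slot_prod_assemble d c ns : size ns = (size d).+1 ->
  slot_prod c (assemble ns (map relax_letter d)) =
  \prod_(i < (size d).+1) (c + count id (take i d)) ^ (nth 0 ns i).+1.
Proof.
elim: d c ns => [|e d IHd] c [|m ns] //= [size_ns].
  case: ns size_ns => // _; rewrite big_ord1 /=.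
  by rewrite -[nseq m La]cats0 slot_prod_nseq /= addn0 expnSr.
rewrite slot_prod_nseq /= IHd // [RHS]big_ord_recl /= addn0 expnSr -mulnA.
congr (_ * (_ * _)); apply: eq_bigr => i _ /=.
by rewrite /bump /= addnA add0n; case: e.
Qed.

Lemma mem_bool_seqs k d : (d \in bool_seqs k) = (size d == k).
Proof.
have mem_cons_map e e' d' (B : seq (seq bool)) :
    (e' :: d' \in map (cons e) B) = (e' == e) && (d' \in B).
  by apply/mapP/andP => [[? ? [-> ->]]|[/eqP -> ?]]; [rewrite eqxx | exists d'].
elim: k d => [|k IHk] [|e d] //=.
- by rewrite mem_cat; apply/negbTE; rewrite negb_or; apply/andP; split; apply/mapP => -[].
- by rewrite mem_cat !mem_cons_map IHk eqSS; case: e; rewrite /= ?orbF.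
Qed.

Lemma uniq_bool_seqs k : uniq (bool_seqs k).
Proof.
elim: k => [|k IHk] //=; rewrite cat_uniq !map_inj_uniq ?IHk //=; try by move=> ? ? [].
rewrite andbT; apply/hasPn => _ /mapP[d _ ->]; by apply/mapP => -[? _ []].
Qed.

Lemma admissibleE xs d : admissible xs d =
  (size xs == size d) && [forall i : 'I_(size d), (nth La xs i == Lab) ==> nth false d i].
Proof.
elim: xs d => [|x xs IHxs] [|e d] //=; first by apply/esym/forallP => -[].
rewrite IHxs eqSS; apply/andP/andP => [[xe /andP[size_xd /forallP ok]]|[size_xd /forallP ok]].
  split=> //; apply/forallP => i; case: (unliftP ord0 i) => [j|] -> //=; exact: ok.
split; first exact: (ok ord0).
by rewrite size_xd; apply/forallP => i; exact: (ok (lift ord0 i)).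
Qed.

(* A vector of R_k is determined by its increments r_{i+1} - r_i, a boolean sequence d;
   then r_i = 1 + (number of [true] among the first i - 1 increments). *)
Definition rvec_of_steps k (d : seq bool) : {ffun 'I_k.+1 -> 'I_k.+2} :=
  [ffun i : 'I_k.+1 => inord (1 + count id (take i d))].

Definition steps_of_rvec k (rr : {ffun 'I_k.+1 -> 'I_k.+2}) : seq bool :=
  [seq rr_at rr i.+1 == (rr_at rr i).+1 | i <- iota 0 k].

Lemma rr_at_rvec k d i : size d = k -> (i <= k)%N ->
  rr_at (rvec_of_steps k d) i = 1 + count id (take i d).
Proof.
move=> size_d lei; rewrite /rr_at ffunE inordK // inordK //.
rewrite ltnS add1n ltnS (leq_trans (count_size _ _)) // size_take.
by case: ltnP; lia.
Qed.

Lemma steps_of_rvecK k d : size d = k -> steps_of_rvec (rvec_of_steps k d) = d.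
Proof.
move=> size_d; apply: (@eq_from_nth _ false); first by rewrite size_map size_iota.
move=> i; rewrite size_map size_iota => lti.
rewrite (nth_map 0) ?size_iota // nth_iota // add0n.
rewrite !rr_at_rvec // ?(ltnW lti) // (count_take_nth false) ?size_d //.
by case: (nth false d i) => /=; lia.
Qed.

Lemma in_Rk_rvec xs d : admissible xs d -> in_Rk xs (rvec_of_steps (size xs) d).
Proof.
rewrite admissibleE => /andP[/eqP size_xd /forallP ok].
have size_d : size d = size xs by rewrite size_xd.
apply/andP; split; first by rewrite (rr_at_rvec size_d) // take0.
apply/forallP => i; rewrite !(rr_at_rvec size_d) ?(ltnW (ltn_ord i)) //.
rewrite (count_take_nth false) ?size_d ?ltn_ord //; have := ok (cast_ord size_xd i) => /=.
case: (nth false d i); rewrite ?addn0 ?addn1 ?eqxx ?orbT //=.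
by rewrite implybF => /negbTE ->.
Qed.

Lemma rr_at_steps xs (rr : {ffun 'I_(size xs).+1 -> 'I_(size xs).+2}) j :
  in_Rk xs rr -> (j <= size xs)%N -> rr_at rr j = 1 + count id (take j (steps_of_rvec rr)).
Proof.
move=> /andP[/eqP rr0 /forallP rr_step]; elim: j => [|j IHj] lej; first by rewrite take0.
rewrite (count_take_nth false) ?size_map ?size_iota //.
rewrite (nth_map 0) ?size_iota // nth_iota // add0n addnA -IHj; last exact: ltnW.
have /andP[+ _] /= := rr_step (Ordinal lej).
move: (rr_at rr j.+1) (rr_at rr j) => a b /orP[/eqP ->|/eqP ->].
  by rewrite eqn_leq ltnn andbF addn0.
by rewrite eqxx addn1.
Qed.

Lemma rvec_of_stepsK xs (rr : {ffun 'I_(size xs).+1 -> 'I_(size xs).+2}) :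
  in_Rk xs rr -> rvec_of_steps (size xs) (steps_of_rvec rr) = rr.
Proof.
move=> rrR; apply/ffunP => i; apply: ord_inj.
have size_steps : size (steps_of_rvec rr) = size xs by rewrite size_map size_iota.
have rr_atE (f : {ffun 'I_(size xs).+1 -> 'I_(size xs).+2}) : f i = rr_at f i :> nat.
  by rewrite /rr_at inord_val.
by rewrite !rr_atE (rr_at_rvec size_steps (ltn_ord i)) (rr_at_steps rrR (ltn_ord i)).
Qed.

Lemma admissible_steps xs (rr : {ffun 'I_(size xs).+1 -> 'I_(size xs).+2}) :
  in_Rk xs rr -> admissible xs (steps_of_rvec rr).
Proof.
move=> /andP[_ /forallP rr_step]; rewrite admissibleE size_map size_iota eqxx /=.
apply/forallP => i; have /andP[_] := rr_step i.
by rewrite (nth_map 0) ?size_iota // nth_iota.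
Qed.

Lemma sum_Rk xs (F : {ffun 'I_(size xs).+1 -> 'I_(size xs).+2} -> int) :
  (\sum_(rr | in_Rk xs rr) F rr =
   \sum_(d <- bool_seqs (size xs) | admissible xs d) F (rvec_of_steps (size xs) d))%R.
Proof.
rewrite -big_filter -[RHS]big_filter -(big_map (rvec_of_steps (size xs)) xpredT).
apply: perm_big; apply: uniq_perm.
- exact: (filter_uniq _ (index_enum_uniq _)).
- rewrite map_inj_in_uniq ?(filter_uniq _ (uniq_bool_seqs _)) //.
  apply: (@can_in_inj _ _ _ _ (@steps_of_rvec (size xs))) => d.
  by rewrite mem_filter mem_bool_seqs => /andP[_ /eqP]; apply: steps_of_rvecK.
move=> rr; rewrite mem_filter mem_index_enum andbT.
apply/idP/mapP => [rrR|[d]].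
  exists (steps_of_rvec rr); last by rewrite (rvec_of_stepsK rrR).
  by rewrite mem_filter admissible_steps // mem_bool_seqs size_map size_iota eqxx.
by rewrite mem_filter => /andP[dA _] ->; apply: in_Rk_rvec.
Qed.

Lemma h_of_rvec k d : size d = k -> h_of (rvec_of_steps k d) = count negb d.
Proof.
move=> size_d; rewrite /h_of -sum1_card big_mkcond (count_sum_nth false) size_d /=.
apply: eq_bigr => i _; rewrite inE !rr_at_rvec ?(ltnW (ltn_ord i)) //.
rewrite (count_take_nth false) ?size_d // eqn_add2l -[X in _ == X]addn0 eqn_add2l.
by case: (nth false d i).
Qed.

Lemma Rk_term_rvec k ns d : size d = k -> size ns = k.+1 ->
  ((-1) ^+ h_of (rvec_of_steps k d) *
   \prod_(i < k.+1) ((rr_at (rvec_of_steps k d) i)%:Z ^+ (nth 0%N ns i).+1))%R =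
  (alt_sign d * (slot_prod 1 (assemble ns (map relax_letter d)))%:Z)%R.
Proof.
move=> <- size_ns; rewrite h_of_rvec //; congr (_ * _)%R.
rewrite slot_prod_assemble // -natz natr_prod.
apply: eq_bigr => i _; have lei : (i <= size d)%N by rewrite -ltnS.
by rewrite rr_at_rvec // natrX natz.
Qed.

Lemma size_assemble ns (ys zs : seq letter) : size ys = size zs ->
  size (assemble ns ys) = size (assemble ns zs).
Proof.
elim: ns ys zs => [|m ns IHns] [|y ys] [|z zs] //= [size_yz].
by rewrite !size_cat /= (IHns _ _ size_yz).
Qed.

Lemma all_assemble_relax ns d : all (fun x => x != Lb) (assemble ns (map relax_letter d)).
Proof.
elim: ns d => [|m ns IHns] [|e d] //=; first by rewrite all_nseq orbT.
by rewrite all_cat all_nseq orbT /= IHns andbT; case: e.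
Qed.

Lemma cnt_S_assemble n ns xs : (0 < n)%N -> size ns = (size xs).+1 ->
  all (fun x => x != La) xs -> size (assemble ns xs) = n.-1 ->
  Posz (cnt_S n (assemble ns xs)) = rhs_sum ns xs.
Proof.
move=> n_gt0 size_ns noA size_w.
have ncompat_split_int U V : (size U < n)%N ->
    ((ncompat n (U ++ Lb :: V))%:Z =
     (ncompat n (U ++ Lab :: V))%:Z - (ncompat n (U ++ La :: V))%:Z)%R.
  by move=> ltUn; rewrite ncompat_split // PoszD addrK.
rewrite cnt_S_ncompat // -[assemble ns xs]cat0s.
rewrite (incl_excl_assemble (F := fun W => Posz (ncompat n W)) ncompat_split_int) //;
  last by rewrite size_w; lia.
rewrite /rhs_sum sum_Rk big_seq_cond [RHS]big_seq_cond /=.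
apply: eq_bigr => d /andP[_ dA].
have size_d : size d = size xs by move: dA; rewrite admissibleE => /andP[/eqP ->].
rewrite Rk_term_rvec //; congr (_ * Posz _)%R.
have size_wd : size (assemble ns (map relax_letter d)) = n.-1.
  by rewrite -size_w; apply: size_assemble; rewrite size_map.
by rewrite -(prednK n_gt0) -size_wd ncompat_slot_prod ?all_assemble_relax.
Qed.

Theorem mainTheorem3 (r n : nat) (pi0 : {perm sigma_t r n})
    (ns : seq nat) (xs : seq letter) :
  (0 < r)%N -> (0 < n)%N -> inG pi0 ->
  size ns = (size xs).+1 ->
  all (fun x => x != La) xs ->
  Psi r n (exc_word pi0) = assemble ns xs ->
  (cnt_G r n (exc_word pi0) = cnt_S n (Psi r n (exc_word pi0))) /\
  (Posz (cnt_S n (Psi r n (exc_word pi0))) = rhs_sum ns xs).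
Proof.
move=> r_gt0 n_gt0 pi0G size_ns noA Psi_w; split; first exact: cnt_G_Psi.
rewrite Psi_w; apply: cnt_S_assemble => //.
by rewrite -Psi_w /Psi size_map size_iota.
Qed.
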